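(* Let $K$ be a knot and define $d_{-1}=[F,d_1]$ on $\mathcal{H}(K)$. Then $[E,d_{-1}]=d_1$ and $[F,d_{-1}]=0$, so $d_1,d_{-1}$ span a $2$-dimensional representation of $\mathfrak{sl}(2)$ (under the adjoint action). Furthermore $$d_{-1}^2=d_{-1}d_1+d_1d_{-1}=0.$$ The symmetry of $\mathcal{H}(K)$ exchanges $d_1$ with $d_{-1}$; in particular, $d_{-1}$ is a cancelling differential if $d_1$ is.
   Context: $\mathcal{H}(K)$ is the reduced triply graded (HOMFLY-PT) Khovanov–Rozansky homology of the knot $K$ over $\mathbb{C}$, finite-dimensional and graded by $(q,a,t)$. By Gorsky–Hogancamp–Mellit, $\mathcal{H}(K)$ carries an $\mathfrak{sl}(2)$ action $E,F,H$ with $[E,F]=H$, $[H,E]=2E$, $[H,F]=-2F$, $H=\tfrac12\deg_q$, $E$ raising $q$ by $4$, $F$ lowering it by $4$; it makes $\mathcal{H}(K)$ symmetric under an identification exchanging tridegrees $(q,a,t)$ and $(-q,a,t+2q)$ (the symmetry). $d_1$ is the first differential of Rasmussen's spectral sequence from $\mathcal{H}(K)$ to (one-dimensional) $\mathfrak{sl}(1)$ homology; $d_1^2=0$, $d_1$ changes degrees by $(q,a,t)\mapsto(q+2,a-2,t)$, and $[E,d_1]=0$. *)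

(* The knot homology H(K) is modelled as a finite-dimensional
   complex vector space C^n (C = R[i], R : realType) with a homogeneous basis;
   endomorphisms are n x n matrices acting on column vectors. *)
From mathcomp Require Import all_boot all_algebra.
From mathcomp Require Import reals complex.
Set Implicit Arguments. Unset Strict Implicit. Unset Printing Implicit Defensive.
Import GRing.Theory.
Local Open Scope ring_scope.

Definition comm {C : fieldType} {n : nat} (A B : 'M[C]_n) : 'M[C]_n :=
  A *m B - B *m A.

(* k-th power of a matrix (works also for n = 0) *)
Definition mxpow {C : fieldType} {n : nat} (A : 'M[C]_n) (k : nat) : 'M[C]_n :=
  iter k (mulmx A) 1%:M.

(* exponential of a matrix, truncated at degree n; this is the genuine
   exponential exp(A) whenever A is nilpotent (then A^n = 0), which is the
   case for E and F below. *)
Definition expmx {C : fieldType} {n : nat} (A : 'M[C]_n) : 'M[C]_n :=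
  \sum_(k < n.+1) (k`!%:R)^-1 *: mxpow A k.

(* The sl(2) Weyl element exp(E) exp(-F) exp(E), realizing the symmetry
   q <-> -q of H(K). *)
Definition weyl {C : fieldType} {n : nat} (E F : 'M[C]_n) : 'M[C]_n :=
  expmx E *m expmx (- F) *m expmx E.

(* dimension of the homology ker d / im d of d acting on column vectors *)
Definition homology_dim {C : fieldType} {n : nat} (d : 'M[C]_n) : nat :=
  (\rank (kermx d^T) - \rank d)%N.

Definition cancelling {C : fieldType} {n : nat} (d : 'M[C]_n) : Prop :=
  d *m d = 0 /\ homology_dim d = 1%N.

Definition qdeg {n : nat} (deg : 'I_n -> int * int * int) i : int := (deg i).1.1.
Definition adeg {n : nat} (deg : 'I_n -> int * int * int) i : int := (deg i).1.2.
Definition tdeg {n : nat} (deg : 'I_n -> int * int * int) i : int := (deg i).2.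

From mathcomp Require Import all_boot all_algebra.
From mathcomp Require Import reals complex zify.
From mathcomp.algebra_tactics Require Import ring.
Import GRing.Theory Num.Theory.
Local Open Scope ring_scope.
Set Implicit Arguments.
Unset Strict Implicit.
Unset Printing Implicit Defensive.

(* Since [H, d1] = d1 and [E, d1] = 0, d1 is a highest-weight vector of weight
   1 for the adjoint action, and the Jacobi identity gives
   [E, ad_F^(k+1) d1] = (k + 1)(1 - k) ad_F^k d1.  Hence ad_F^2 d1 is a
   highest-weight vector of weight -3; as ad_F is nilpotent (F lowers the
   q-grading) it must vanish, i.e. [F, d_{-1}] = 0.  Since E and F are
   nilpotent, exp(A) X = (X + [A, X]) exp(A) whenever [A, [A, X]] = 0, so the
   Weyl element exp(E) exp(-F) exp(E) conjugates d1 to -d_{-1} and d_{-1} to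
   d1; the vanishing of d_{-1}^2 and the cancelling property are then
   inherited from d1. *)

Section Commutator.
Variables (C : fieldType) (n : nat).
Implicit Types A B X Y : 'M[C]_n.

Lemma commE A B : comm A B = A * B - B * A. Proof. by []. Qed.

Lemma comm0r A : comm A 0 = 0.
Proof. by rewrite commE mulr0 mul0r subrr. Qed.

Lemma commNl A X : comm (- A) X = - comm A X.
Proof. by rewrite !commE mulrN mulNr opprK opprB addrC. Qed.

Lemma commNr A X : comm A (- X) = - comm A X.
Proof. by rewrite !commE mulrN mulNr opprK opprB addrC. Qed.

Lemma commZl a A X : comm (a *: A) X = a *: comm A X.
Proof. by rewrite !commE scalerBr -!mulmxE scalemxAl scalemxAr. Qed.

Lemma commZr a A X : comm A (a *: X) = a *: comm A X.
Proof. by rewrite !commE scalerBr -!mulmxE -scalemxAl -scalemxAr. Qed.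

Lemma commBr A X Y : comm A (X - Y) = comm A X - comm A Y.
Proof.
rewrite !commE mulrBr mulrBl !opprB addrACA [RHS]addrACA.
by rewrite [- (A * Y) + _]addrC.
Qed.

Lemma commMr A X Y : comm A (X * Y) = comm A X * Y + X * comm A Y.
Proof. by rewrite !commE mulrBl mulrBr !mulrA addrA subrK. Qed.

Lemma commMl A B X : comm (A * B) X = A * comm B X + comm A X * B.
Proof. by rewrite !commE mulrBr mulrBl !mulrA addrA subrK. Qed.

Lemma comm_jacobi A B X :
  comm A (comm B X) = comm (comm A B) X + comm B (comm A X).
Proof.
rewrite [comm B X]commE commBr !commMr [comm (comm A B) X]commE.
by rewrite [comm B (comm A X)]commE opprD [- _ + - _]addrC addrACA.
Qed.

End Commutator.

(* The minimal polynomial of A divides both X^k and the characteristic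
   polynomial, so it is X^m with m <= n. *)
Lemma nilpotent_mx_expr_ge (C : fieldType) n (A : 'M[C]_n) k :
  A ^+ k = 0 -> forall j, (n <= j)%N -> A ^+ j = 0.
Proof.
case: n A => [|n] A Ak0 j; first by move=> _; apply/matrixP => -[].
have : mxminpoly A %| ('X - 0%:P) ^+ k.
  by apply: mxminpoly_min; rewrite polyC0 subr0 rmorphXn /= horner_mx_X Ak0.
case/dvdp_exp_XsubCP => m _.
rewrite polyC0 subr0 eqp_monic ?monicXn ?mxminpoly_monic // => /eqP pAE.
have := mx_root_minpoly A; rewrite pAE rmorphXn /= horner_mx_X => Am0.
have : (size (mxminpoly A) <= size (char_poly A))%N.
  by apply/dvdp_leq/mxminpoly_dvd_char; rewrite -size_poly_eq0 size_char_poly.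
rewrite pAE size_polyXn size_char_poly ltnS => le_mn le_nj.
by rewrite -(subnK (leq_trans le_mn le_nj)) exprD Am0 mulr0.
Qed.

Section Grading.
Variables (C : fieldType) (n : nat) (q : 'I_n -> int).
Implicit Types A X Y : 'M[C]_n.

Definition homogeneous (s : int) X : Prop :=
  forall i j, X i j != 0 -> q i = q j + s.

Lemma homogeneousB s X Y :
  homogeneous s X -> homogeneous s Y -> homogeneous s (X - Y).
Proof.
move=> hX hY i j; rewrite !mxE; have [Xij0|/hX //] := eqVneq (X i j) 0.
by rewrite Xij0 sub0r oppr_eq0 => /hY.
Qed.

Lemma homogeneousM s t X Y :
  homogeneous s X -> homogeneous t Y -> homogeneous (s + t) (X * Y).
Proof.
move=> hX hY i j; rewrite -mulmxE mxE.
apply: contraNeq => ne; rewrite big1 // => l _.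
have [->|/hX qil] := eqVneq (X i l) 0; first by rewrite mul0r.
have [->|/hY qlj] := eqVneq (Y l j) 0; first by rewrite mulr0.
by move: ne; rewrite qil qlj -addrA [t + s]addrC eqxx.
Qed.

Lemma homogeneous_comm s t A X :
  homogeneous s A -> homogeneous t X -> homogeneous (s + t) (comm A X).
Proof.
move=> hA hX; apply: homogeneousB; first exact: homogeneousM.
by rewrite addrC; apply: homogeneousM.
Qed.

Lemma homogeneousX s A k : homogeneous s A -> homogeneous (s * k%:Z) (A ^+ k).
Proof.
move=> hA; elim: k => [|k IHk].
  move=> i j; rewrite expr0 mxE mulr0 addr0.
  by case: (eqVneq i j) => [->|] //; rewrite mulr0n eqxx.
have -> : s * k.+1%:Z = s + s * k%:Z by rewrite -addn1 PoszD; ring.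
by rewrite exprS; apply: homogeneousM.
Qed.

Lemma homogeneous_iter_comm s t A X k : homogeneous s A -> homogeneous t X ->
  homogeneous (t + s * k%:Z) (iter k (comm A) X).
Proof.
move=> hA hX; elim: k => [|k IHk]; first by rewrite mulr0 addr0.
have -> : t + s * k.+1%:Z = s + (t + s * k%:Z) by rewrite -addn1 PoszD; ring.
exact: homogeneous_comm.
Qed.

Lemma homogeneous_eq0 s X :
  (2 * \max_i `|q i| < `|s|)%N -> homogeneous s X -> X = 0.
Proof.
move=> large_s hX; apply/matrixP => i j; rewrite mxE.
apply/eqP/negP => /negP /hX qij.
have := leq_bigmax (F := fun i => `|q i|%N) i.
have := leq_bigmax (F := fun i => `|q i|%N) j.
lia.
Qed.

Lemma homogeneous_nilpotent s A : s != 0 -> homogeneous s A -> A ^+ n = 0.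
Proof.
move=> s_neq0 hA; apply: (@nilpotent_mx_expr_ge _ _ _ (2 * \max_i `|q i|).+1) => //.
apply: (homogeneous_eq0 (s := s * (2 * \max_i `|q i|).+1%:Z)); last exact: homogeneousX.
rewrite abszM /=; have := absz_gt0 s; rewrite s_neq0; nia.
Qed.

Lemma homogeneous_ad_nilpotent s t A X : s != 0 ->
  homogeneous s A -> homogeneous t X -> exists k, iter k (comm A) X = 0.
Proof.
move=> s_neq0 hA hX; set k := (`|t| + 2 * \max_i `|q i|).+1; exists k.
apply: (homogeneous_eq0 (s := t + s * k%:Z)); last exact: homogeneous_iter_comm.
have := absz_gt0 s; rewrite s_neq0; nia.
Qed.

Lemma comm_diag_homogeneous (c : C) s X : homogeneous s X ->
  comm (diag_mx (\row_j ((q j)%:~R * c))) X = (s%:~R * c) *: X.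
Proof.
move=> hX; apply/matrixP => i j.
rewrite commE -!mulmxE mul_diag_mx mul_mx_diag !mxE.
have [->|/hX ->] := eqVneq (X i j) 0; first by rewrite !mulr0 mul0r subrr.
by rewrite intrD; ring.
Qed.

End Grading.

Lemma unitmx1D_nilpotent (C : fieldType) n (N : 'M[C]_n) k :
  N ^+ k = 0 -> 1 + N \in unitmx.
Proof.
move=> Nk0; have geometric : (1 + N) * \sum_(i < k) (- N) ^+ i = 1.
  have := subrX1 (- N) k; rewrite exprNn Nk0 mulr0 sub0r -opprD mulNr => /oppr_inj.
  by rewrite addrC => <-.
by have [] := mulmx1_unit geometric.
Qed.

Section Exponential.
Variables (C : fieldType) (n : nat).
Hypothesis charC0 : [pchar C] =i pred0.
Implicit Types A X : 'M[C]_n.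

Lemma expmxE A : expmx A = \sum_(k < n.+1) (k`!%:R^-1 : C) *: A ^+ k.
Proof.
apply: eq_bigr => k _; congr (_ *: _).
by elim: (val k) => //= j ->; rewrite exprS.
Qed.

Lemma comm_exprS A X k : comm A (comm A X) = 0 ->
  comm (A ^+ k.+1) X = (comm A X * A ^+ k) *+ k.+1.
Proof.
set Y := comm A X => /eqP; rewrite commE subr_eq0 => /eqP AY_YA.
elim: k => [|k IHk]; first by rewrite expr1 expr0 mulr1.
by rewrite exprS commMl IHk mulrnAr mulrA AY_YA -mulrA -exprS -mulrSr.
Qed.

Lemma expmx_conj A X : A ^+ n = 0 -> comm A (comm A X) = 0 ->
  expmx A * X = (X + comm A X) * expmx A.
Proof.
move=> An0 AAX0; set Y := comm A X.
have termwise k : (k.+1`!%:R^-1 : C) *: A ^+ k.+1 * X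
    = X * ((k.+1`!%:R^-1 : C) *: A ^+ k.+1) + Y * ((k`!%:R^-1 : C) *: A ^+ k).
  have k1_neq0 : (k.+1%:R : C) != 0 by rewrite (pcharf0P _).1.
  rewrite -!mulmxE -!scalemxAl -!scalemxAr !mulmxE.
  have -> : A ^+ k.+1 * X = X * A ^+ k.+1 + comm (A ^+ k.+1) X.
    by rewrite commE addrC subrK.
  rewrite comm_exprS // scalerDr -scaler_nat scalerA.
  by rewrite factS natrM invfM mulrAC mulVf ?mul1r.
rewrite expmxE mulr_suml mulrDl !mulr_sumr big_ord_recl [in RHS]big_ord_recl.
rewrite [X in _ = _ + X]big_ord_recr /= An0 scaler0 mulr0 addr0.
rewrite !expr0 -!mulmxE -scalemxAl -scalemxAr !mulmxE mul1r mulr1 -addrA -big_split /=.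
by congr (_ + _); apply: eq_bigr => k _; rewrite termwise.
Qed.

Lemma expmx_unit A : A ^+ n = 0 -> expmx A \in unitmx.
Proof.
move=> An0; set P := \sum_(i < n) (i.+1`!%:R^-1 : C) *: A ^+ i.
have expmx1D : expmx A = 1 + A * P.
  rewrite expmxE big_ord_recl expr0 fact0 invr1 scale1r mulr_sumr; congr (_ + _).
  by apply: eq_bigr => i _; rewrite lift0 exprS -!mulmxE scalemxAr.
have AP : GRing.comm A P.
  rewrite /GRing.comm mulr_sumr mulr_suml; apply: eq_bigr => i _.
  by rewrite -!mulmxE -scalemxAl -scalemxAr !mulmxE -exprS exprSr.
by rewrite expmx1D (@unitmx1D_nilpotent _ _ _ n) // exprMn_comm // An0 mul0r.
Qed.

Section Weyl.
Variables E F : 'M[C]_n.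
Hypotheses (nilE : E ^+ n = 0) (nilF : F ^+ n = 0).

Let nilNF : (- F) ^+ n = 0. Proof. by rewrite exprNn nilF mulr0. Qed.

Lemma weyl_unit : weyl E F \in unitmx.
Proof. by rewrite !unitmx_mul !expmx_unit. Qed.

Lemma weyl_doublet v w :
    comm E v = 0 -> comm E w = v -> comm F v = w -> comm F w = 0 ->
  weyl E F *m v = - (w *m weyl E F) /\ weyl E F *m w = v *m weyl E F.
Proof.
move=> Ev Ew Fv Fw.
have eEv : expmx E *m v = v *m expmx E.
  have := expmx_conj nilE (_ : comm E (comm E v) = 0).
  by rewrite Ev comm0r addr0; apply.
have eEw : expmx E *m w = (w + v) *m expmx E.
  by have := expmx_conj nilE (_ : comm E (comm E w) = 0); rewrite Ew Ev; apply.
have eFv : expmx (- F) *m v = (v - w) *m expmx (- F).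
  have := expmx_conj nilNF (_ : comm (- F) (comm (- F) v) = 0).
  by rewrite !commNl Fv commNr Fw !oppr0; apply.
have eFw : expmx (- F) *m w = w *m expmx (- F).
  have := expmx_conj nilNF (_ : comm (- F) (comm (- F) w) = 0).
  by rewrite !commNl Fw oppr0 comm0r oppr0 addr0; apply.
rewrite /weyl; set eE := expmx E; set eF := expmx (- F); split.
  rewrite -mulmxA eEv mulmxA -(mulmxA eE) eFv mulmxA mulmxBr eEv eEw -!mulmxBl.
  by rewrite opprD addrCA subrr addr0 !mulNmx !mulmxA.
rewrite -mulmxA eEw mulmxA -(mulmxA eE) mulmxDr eFw eFv -mulmxDl addrC subrK.
by rewrite mulmxA eEv !mulmxA.
Qed.

End Weyl.

End Exponential.

Section Sl2.
Variables (C : fieldType) (n : nat) (E F H : 'M[C]_n).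
Hypotheses (hEF : comm E F = H) (hHF : comm H F = - (2%:R *: F)).

Lemma weight_string X (l : C) : comm E X = 0 -> comm H X = l *: X -> forall k,
  comm H (iter k (comm F) X) = (l - (2 * k)%:R) *: iter k (comm F) X /\
  comm E (iter k.+1 (comm F) X) = (k.+1%:R * (l - k%:R)) *: iter k (comm F) X.
Proof.
move=> EX HX; elim=> [|k [IH1 IH2]].
  rewrite /= muln0 subr0; split=> //.
  by rewrite comm_jacobi hEF EX comm0r addr0 HX mul1r.
set u := iter k (comm F) X.
have HFu : comm H (comm F u) = (l - (2 * k.+1)%:R) *: comm F u.
  rewrite comm_jacobi hHF commNl commZl IH1 commZr -scaleNr -scalerDl.
  by congr (_ *: _); ring.
split=> //=; rewrite comm_jacobi hEF HFu IH2 commZr -scalerDl.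
by congr (_ *: _); ring.
Qed.

Hypothesis charC0 : [pchar C] =i pred0.

Lemma highest_weight_eq0 X (l : C) : (forall k : nat, l != k%:R) ->
    comm E X = 0 -> comm H X = l *: X -> (exists m, iter m (comm F) X = 0) ->
  X = 0.
Proof.
move=> l_notin_nat EX HX [m]; elim: m => [//|m IHm] Fm0; apply: IHm.
have := (weight_string EX HX m).2; rewrite Fm0 comm0r => /esym/eqP.
rewrite scaler_eq0 mulf_eq0 (pcharf0P _).1 // subr_eq0.
by rewrite (negbTE (l_notin_nat m)) => /eqP.
Qed.

Lemma sl2_doublet X : comm E X = 0 -> comm H X = X ->
    (exists m, iter m (comm F) X = 0) ->
  [/\ comm E (comm F X) = X, comm H (comm F X) = - comm F X
     & comm F (comm F X) = 0].
Proof.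
move=> EX HX [m Fm0]; have {}HX : comm H X = 1 *: X by rewrite scale1r.
have [_ EFX] := weight_string EX HX 0%N.
have [HFX EF2X] := weight_string EX HX 1%N.
have [HF2X _] := weight_string EX HX 2%N.
split.
- by rewrite EFX mul1r subr0 scale1r.
- by rewrite HFX -[RHS]scaleN1r; congr (_ *: _); ring.
- apply: (highest_weight_eq0 _ _ HF2X).
  + move=> k; rewrite eq_sym -subr_eq0.
    have -> : k%:R - (1 - (2 * 2)%:R) = (k + 3)%:R :> C by rewrite natrD; ring.
    by rewrite (pcharf0P _).1 // addn3.
  + by rewrite EF2X subrr mulr0 scale0r.
  + by exists m; rewrite -iterD addnC iterD Fm0 /= !comm0r.
Qed.

End Sl2.

Section Similarity.
Variables (C : fieldType) (n : nat).
Implicit Types d W X Y : 'M[C]_n.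

Lemma homology_dimE d : homology_dim d = (n - \rank d - \rank d)%N.
Proof. by rewrite /homology_dim mxrank_ker mxrank_tr. Qed.

Lemma cancellingN d : cancelling (- d) <-> cancelling d.
Proof. by rewrite /cancelling !homology_dimE mxrank_opp mulNmx mulmxN opprK. Qed.

Lemma similar_rank W X Y : W \in unitmx -> W *m X = Y *m W -> \rank Y = \rank X.
Proof.
move=> Wunit WXY; have Wfree : row_free W by rewrite row_free_unit.
have Wfull : row_full W by rewrite row_full_unit.
by rewrite -(mxrankMfree Y Wfree) -WXY (eqmxMfull X Wfull).
Qed.

Lemma similar_sqr_eq0 W X Y : W \in unitmx -> W *m X = Y *m W ->
  X *m X = 0 -> Y *m Y = 0.
Proof.
move=> Wunit WXY XX0; rewrite -(mulmxK Wunit (Y *m Y)) -(mulmxA Y Y W) -WXY.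
by rewrite mulmxA -WXY -mulmxA XX0 mulmx0 mul0mx.
Qed.

Lemma cancelling_similar W X Y : W \in unitmx -> W *m X = Y *m W ->
  cancelling X -> cancelling Y.
Proof.
move=> Wunit WXY [XX0 hX]; split; first exact: similar_sqr_eq0 WXY XX0.
by rewrite homology_dimE (similar_rank Wunit WXY) -homology_dimE.
Qed.

End Similarity.

Theorem corollary3p29 (R : realType) (n : nat)
    (deg : 'I_n -> int * int * int)
    (E F H d1 : 'M[R[i]]_n)
    (* sl(2) relations *)
    (hEF : comm E F = H) (hHE : comm H E = 2%:R *: E) (hHF : comm H F = - (2%:R *: F))
    (* H = (1/2) deg_q *)
    (hH : H = diag_mx (\row_j ((qdeg deg j)%:~R / 2%:R)))
    (* E raises q by 4, F lowers q by 4 *)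
    (hEdeg : forall i j, E i j != 0 -> qdeg deg i = qdeg deg j + 4)
    (hFdeg : forall i j, F i j != 0 -> qdeg deg i = qdeg deg j - 4)
    (* d1 has degree (2, -2, 0), d1^2 = 0, [E, d1] = 0 *)
    (hd1deg : forall i j, d1 i j != 0 ->
       [/\ qdeg deg i = qdeg deg j + 2, adeg deg i = adeg deg j - 2
         & tdeg deg i = tdeg deg j])
    (hd1sq : d1 *m d1 = 0)
    (hEd1 : comm E d1 = 0) :
  let dm1 := comm F d1 in
  (* sl(2)-module structure of span(d1, d_{-1}) under the adjoint action *)
  [/\ comm E d1 = 0, comm H d1 = d1, comm E dm1 = d1, comm F dm1 = 0
     & comm H dm1 = - dm1] /\
  (* d_{-1}^2 = d_{-1} d1 + d1 d_{-1} = 0 *)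
  (dm1 *m dm1 = 0 /\ dm1 *m d1 + d1 *m dm1 = 0) /\
  (* the symmetry (Weyl element) exchanges d1 and d_{-1} (up to sign) *)
  [/\ weyl E F \in unitmx,
      weyl E F *m d1 = - (dm1 *m weyl E F)
    & weyl E F *m dm1 = d1 *m weyl E F] /\
  (cancelling d1 -> cancelling dm1).
Proof.
move=> dm1; set q := qdeg deg.
have hE : homogeneous q 4 E by move=> i j /hEdeg.
have hF : homogeneous q (-4) F by move=> i j /hFdeg.
have hd1 : homogeneous q 2 d1 by move=> i j /hd1deg[].
have hHd1 : comm H d1 = d1.
  by rewrite hH (comm_diag_homogeneous _ hd1) mulfV ?pnatr_eq0 ?scale1r.
have Fnil : exists m, iter m (comm F) d1 = 0.
  by apply: homogeneous_ad_nilpotent hF hd1.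
have charC0 : [pchar R[i]] =i pred0 := pchar_num _.
have [hEdm1 hHdm1 hFdm1] := sl2_doublet hEF hHF charC0 hEd1 hHd1 Fnil.
have nilE : E ^+ n = 0 by apply: homogeneous_nilpotent hE.
have nilF : F ^+ n = 0 by apply: homogeneous_nilpotent hF.
have Wunit := weyl_unit nilE nilF.
have [Wd1 Wdm1] := weyl_doublet charC0 nilE nilF hEd1 hEdm1 erefl hFdm1.
have Wd1N : weyl E F *m d1 = (- dm1) *m weyl E F by rewrite mulNmx.
split; first by [].
split.
  split; first by have := similar_sqr_eq0 Wunit Wd1N hd1sq; rewrite mulNmx mulmxN opprK.
  by have := commMr F d1 d1; rewrite -mulmxE hd1sq comm0r => /esym.
split=> // cancelling_d1.
exact/cancellingN/(cancelling_similar Wunit Wd1N).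
Qed.
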